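(* Assume conditions (A1) and (A2). Then there is an absolute constant $c>0$ such that for all $0\le\lambda\le\varepsilon_n^{-1}$, \[ \Big|\Psi_n(\lambda)-\frac{\lambda^2}{2}\Big|\le c\,\lambda^{2+\rho}\varepsilon_n^\rho+\frac{\lambda^2\delta_n^2}{2}. \]
   Context: Standing setup: Fix $n\ge 1$. Let $(\Omega,\mathcal F,\mathbf P)$ be a probability space with $\sigma$-fields $\{\emptyset,\Omega\}=\mathcal F_0\subseteq\mathcal F_1\subseteq\cdots\subseteq\mathcal F_n\subseteq\mathcal F$, and let $(\xi_i,\mathcal F_i)_{i=0,\dots,n}$ be a sequence of square-integrable martingale differences with $\xi_0=0$ (each $\xi_i$ is $\mathcal F_i$-measurable and $\mathbf E[\xi_i\mid\mathcal F_{i-1}]=0$). Set $\langle X\rangle_n=\sum_{i=1}^n\mathbf E[\xi_i^2\mid\mathcal F_{i-1}]$ and $\xi^+=\max\{\xi,0\}$. Condition (A1): there exist a constant $\rho\in(0,1]$ and a number $\varepsilon_n\in(0,\tfrac12]$ such that $\mathbf E[|\xi_i|^{2+\rho}e^{\varepsilon_n^{-1}\xi_i^+}\mid\mathcal F_{i-1}]\le \varepsilon_n^{\rho}\,\mathbf E[\xi_i^2\mid\mathcal F_{i-1}]$ for all $1\le i\le n$. Condition (A2): there exists a number $\delta_n\in[0,\tfrac12]$ such that $|\langle X\rangle_n-1|\le\delta_n^2$ a.s. Predictable cumulant: $\Psi_n(\lambda)=\sum_{i=1}^n\log\mathbf E[e^{\lambda\xi_i}\mid\mathcal F_{i-1}]$.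 *)

From HB Require Import structures.
From mathcomp Require Import all_boot all_order all_algebra.
From mathcomp Require Import all_classical all_reals all_analysis.
Set Implicit Arguments. Unset Strict Implicit. Unset Printing Implicit Defensive.
Import Order.TTheory GRing.Theory Num.Theory.
Local Open Scope classical_set_scope.
Local Open Scope ring_scope.

Section defs.
Context {d : measure_display} {T : measurableType d} {R : realType}.

Definition sub_sigma_field (G : set (set T)) : Prop :=
  sigma_algebra setT G /\ (forall A, G A -> measurable A).

Definition G_measurable (G : set (set T)) (f : T -> R) : Prop :=
  forall B : set R, measurable B -> G (f @^-1` B).

Definition is_cond_exp (P : probability T R) (G : set (set T))
    (X Y : T -> R) : Prop :=
  [/\ G_measurable G Y,
      P.-integrable setT (fun x => (X x)%:E),
      P.-integrable setT (fun x => (Y x)%:E) &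
      forall A, G A ->
        (\int[P]_(x in A) (Y x)%:E = \int[P]_(x in A) (X x)%:E)%E].

Definition filtration (n : nat) (F : nat -> set (set T)) : Prop :=
  [/\ F 0%N = [set set0; setT],
      (forall i, (i <= n)%N -> sub_sigma_field (F i)) &
      (forall i, (i < n)%N -> F i `<=` F i.+1)].

Definition sq_int_mart_diff (P : probability T R) (n : nat)
    (F : nat -> set (set T)) (xi : nat -> T -> R) : Prop :=
  [/\ xi 0%N = (fun _ => 0),
      (forall i, (i <= n)%N -> G_measurable (F i) (xi i)),
      (forall i, (i <= n)%N ->
         P.-integrable setT (fun x => ((xi i x) ^+ 2)%:E)) &
      (forall i, (1 <= i <= n)%N ->
         is_cond_exp P (F i.-1) (xi i) (fun _ => 0))].

End defs.

From HB Require Import structures.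
From mathcomp Require Import all_boot all_order all_algebra.
From mathcomp Require Import all_classical all_reals all_analysis.
From mathcomp Require Import measurable_realfun ring lra.
Set Implicit Arguments. Unset Strict Implicit. Unset Printing Implicit Defensive.
Import Order.TTheory GRing.Theory Num.Theory.
Import numFieldNormedType.Exports.
Local Open Scope classical_set_scope.
Local Open Scope ring_scope.

(* For lambda * eps <= 1 the Taylor remainder of expR (lambda x) at order two is at
   most 4 lambda^(2+rho) |x|^(2+rho) expR (x^+ / eps).  Taking conditional
   expectations, (A1) bounds the distance from E[e^(lambda xi_i) | F_(i-1)] to
   1 + lambda^2 V_i / 2 by 4 lambda^(2+rho) eps^rho V_i.  Since
   |x|^(2+rho) >= (1 + rho/2) eps^rho x^2 - (rho/2) eps^(2+rho), (A1) also forces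
   V_i <= eps^2, which makes the quadratic term small enough for the logarithm to
   cost only a factor 2.  Summing over i and replacing sum_i V_i by 1 through (A2)
   gives the bound with c = 10. *)

Section power_bounds.
Variable R : realType.
Implicit Types (x y u r : R).

Lemma powR2D x r : 0 <= x -> 0 < r -> x `^ (2 + r) = x ^+ 2 * x `^ r.
Proof.
move=> x0 r0; rewrite powRD; last by rewrite gt_eqF // addr_gt0.
by rewrite -(powR_mulrn 2 x0).
Qed.

Lemma sqr_le_powR x r : 0 <= x <= 1 -> r <= 2 -> x ^+ 2 <= x `^ r.
Proof.
move=> /andP[x0 x1] r2; have [->|xn0] := eqVneq x 0.
  by rewrite expr0n powR_ge0.
rewrite -(powR_mulrn 2 x0); apply: ger_powR => //.
by rewrite lt_def xn0 x0.
Qed.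

Lemma ln_le_subr1 x : 0 < x -> ln x <= x - 1.
Proof.
by move=> x0; have := @le_ln1Dx R (x - 1); rewrite [1 + _]addrC subrK; apply; lra.
Qed.

Lemma ln_ge_subr1 x : 0 < x -> 1 - x^-1 <= ln x.
Proof.
move=> x0; have := ln_le_subr1 (_ : 0 < x^-1); rewrite lnV ?posrE //.
by move=> /(_ _); rewrite invr_gt0 => /(_ x0); lra.
Qed.

Lemma ln_approx (m a b : R) : 1 <= m -> 0 <= a -> a ^+ 2 <= b ->
  `|m - 1 - a| <= b -> `|ln m - a| <= 2 * b.
Proof.
move=> m1 a0 a2b /[!ler_norml] /andP[lo hi].
have m0 : 0 < m by apply: lt_le_trans m1.
have b0 : 0 <= b by apply: le_trans a2b; exact: sqr_ge0.
apply/andP; split; last by have := ln_le_subr1 m0; lra.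
have [|u0] := leP (a - b) 0; first by have := ln_ge0 m1; lra.
have u2 : (a - b) ^+ 2 <= b.
  by apply: le_trans a2b; rewrite ler_sqr ?nnegrE; lra.
have invu : (1 + (a - b))^-1 <= 1 - (a - b) + (a - b) ^+ 2.
  have : 0 <= (a - b) ^+ 3 by rewrite exprn_ge0 // ltW.
  rewrite -div1r ler_pdivrMr; last lra.
  have -> : (1 - (a - b) + (a - b) ^+ 2) * (1 + (a - b)) = 1 + (a - b) ^+ 3 by ring.
  lra.
have : m^-1 <= (1 + (a - b))^-1 by rewrite lef_pV2 ?posrE //; lra.
have := ln_ge_subr1 m0; lra.
Qed.

(* Tangent line at t = 1 of the convex map t |-> t^(1 + r/2), taken at t = u^2. *)
Lemma powR2D_ge u r : 0 <= u -> 0 < r -> (1 + r / 2) * u ^+ 2 - r / 2 <= u `^ (2 + r).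
Proof.
move=> u0 r0; rewrite powR2D //; have [->|un0] := eqVneq u 0.
  by rewrite expr0n /= mul0r mulr0 sub0r oppr_le0; lra.
have upos : 0 < u by rewrite lt_def un0.
have powr : 1 + r * (1 - u^-1) <= u `^ r.
  rewrite /powR (negbTE un0); apply: le_trans (expR_ge1Dx _).
  by rewrite lerD2l ler_wpM2l ?ln_ge_subr1 // ltW.
have uu : u ^+ 2 * u^-1 = u by rewrite expr2 mulfK.
have : u ^+ 2 * (1 + r * (1 - u^-1)) <= u ^+ 2 * u `^ r.
  by rewrite ler_wpM2l ?sqr_ge0.
have : 0 <= r / 2 * (u - 1) ^+ 2 by rewrite mulr_ge0 ?sqr_ge0 //; lra.
have -> : u ^+ 2 * (1 + r * (1 - u^-1)) = u ^+ 2 + r * u ^+ 2 - r * (u ^+ 2 * u^-1) by ring.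
rewrite uu; nra.
Qed.

Lemma norm_powR2D_ge x e r : 0 < e -> 0 < r ->
  (1 + r / 2) * e `^ r * x ^+ 2 - r / 2 * e `^ (2 + r) <= `|x| `^ (2 + r).
Proof.
move=> e0 r0; set u := `|x| / e.
have xue : `|x| = u * e by rewrite /u divfK // gt_eqF.
have u0 : 0 <= u by rewrite divr_ge0 // ltW.
have er0 : 0 <= e `^ r by exact: powR_ge0.
have -> : x ^+ 2 = u ^+ 2 * e ^+ 2 by rewrite -real_normK ?num_real // xue exprMn.
rewrite xue (powRM _ u0 (ltW e0)).
have := ler_wpM2r (powR_ge0 e (2 + r)) (powR2D_ge u0 r0).
rewrite [e `^ _](powR2D (ltW e0) r0).
lra.
Qed.
End power_bounds.

Section exponential_bounds.
Variable R : realType.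
Implicit Types (x y z : R).

Lemma le_derive_ge0 (f df : R -> R) (b : R) :
  (forall x, is_derive x 1 f (df x)) -> 0 <= b ->
  (forall x, 0 <= x <= b -> 0 <= df x) -> f 0 <= f b.
Proof.
move=> fdf b0 df0.
have cf : {within `[0, b], continuous f}.
  by apply: derivable_within_continuous => x _; case: (fdf x).
have [c] := MVT_segment b0 (fun x _ => fdf x) cf.
rewrite in_itv /= => c0b fE.
by rewrite -subr_ge0 fE subr0 mulr_ge0 ?df0.
Qed.

(* Each Taylor-type estimate below reads [c + a0 <= expR_cubic c s a0 a1 a2 a3 z],
   i.e. f 0 <= f z, and follows from the sign of the derivative. *)
Definition expR_cubic (c s a0 a1 a2 a3 z : R) :=
  c * expR (s * z) + a0 + a1 * z + a2 * z ^+ 2 + a3 * z ^+ 3.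

Lemma expR_cubic_le (c s a0 a1 a2 a3 z : R) : 0 <= z ->
  (forall x, 0 <= x <= z ->
     0 <= c * s * expR (s * x) + a1 + 2 * a2 * x + 3 * a3 * x ^+ 2) ->
  c + a0 <= expR_cubic c s a0 a1 a2 a3 z.
Proof.
move=> z0 df0.
have -> : c + a0 = expR_cubic c s a0 a1 a2 a3 0.
  by rewrite /expR_cubic !(mulr0, expr0n, addr0) expR0 mulr1.
apply: le_derive_ge0 z0 df0 => x.
have ds : is_derive x 1 (fun z => expR (s * z)) (expR (s * x) * s).
  have := is_derive1_comp (is_derive_expR (s * x)) (is_deriveZ s (is_derive_id x 1)).
  by rewrite /GRing.scale /= mulr1.
have h := is_deriveD (is_deriveD (is_deriveD (is_deriveD
   (is_deriveZ c ds) (@is_derive_cst R R R a0 x 1))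
   (is_deriveZ a1 (is_derive_id x 1)))
   (is_deriveZ a2 (is_deriveX 2 (is_derive_id x 1))))
   (is_deriveZ a3 (is_deriveX 3 (is_derive_id x 1))).
have -> : expR_cubic c s a0 a1 a2 a3 = (c \*: (fun z => expR (s * z)) + cst a0
    + a1 \*: id + a2 \*: id ^+ 2 + a3 \*: id ^+ 3).
  by apply/funext => y; rewrite !fctE /GRing.scale.
apply: (is_derive_eq h); rewrite /GRing.scale /= !mulr1 expr1; ring.
Qed.

Lemma expR_le4 z : z <= 1 -> expR z <= 4.
Proof.
(* expR (1/2) <= 2 because expR (- 1/2) >= 1 - 1/2. *)
move=> z1; have ehalf : expR 1 = expR 2^-1 * expR 2^-1 :> R.
  by rewrite -expRD; congr expR; lra.
have : 2^-1 <= expR (- 2^-1) :> R by have := @expR_ge1Dx R (- 2^-1); lra.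
have := @expRxMexpNx_1 R 2^-1; have := @expR_gt0 R 2^-1 => h0 h1 h2.
have : expR 2^-1 <= 2 :> R by nra.
by move=> h; apply: (le_trans (y := expR 1)); [rewrite ler_expR | rewrite ehalf; nra].
Qed.

Lemma expR_ge_taylor2 z : 0 <= z -> 1 + z + z ^+ 2 / 2 <= expR z.
Proof.
move=> z0; suff : 1 + -1 <= expR_cubic 1 1 (-1) (-1) (- 2^-1) 0 z.
  by rewrite /expR_cubic !mul1r; lra.
by apply: expR_cubic_le => // x _; rewrite !mul1r; have := expR_ge1Dx x; lra.
Qed.

Lemma expR_sub1_le z : 0 <= z <= 1 -> expR z - 1 <= 4 * z.
Proof.
move=> /andP[z0 z1]; suff : -1 + 1 <= expR_cubic (-1) 1 1 4 0 0 z.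
  by rewrite /expR_cubic !mul1r; lra.
apply: expR_cubic_le => // x /andP[_ xz]; rewrite !mul1r.
by have := expR_le4 (le_trans xz z1); lra.
Qed.

Lemma expR_sub1D_le z : 0 <= z <= 1 -> expR z - 1 - z <= 2 * z ^+ 2.
Proof.
move=> /andP[z0 z1]; suff : -1 + 1 <= expR_cubic (-1) 1 1 1 2 0 z.
  by rewrite /expR_cubic !mul1r; lra.
apply: expR_cubic_le => // x /andP[x0 xz]; rewrite !mul1r.
have /expR_sub1_le : 0 <= x <= 1 by rewrite x0 (le_trans xz z1).
lra.
Qed.

Lemma expR_le_taylor2 z : 0 <= z <= 1 -> expR z <= 1 + z + z ^+ 2 / 2 + z ^+ 3.
Proof.
move=> /andP[z0 z1]; suff : -1 + 1 <= expR_cubic (-1) 1 1 1 2^-1 1 z.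
  by rewrite /expR_cubic !mul1r; lra.
apply: expR_cubic_le => // x /andP[x0 xz]; rewrite !mul1r.
have /expR_sub1D_le : 0 <= x <= 1 by rewrite x0 (le_trans xz z1).
have : 0 <= x ^+ 2 by rewrite sqr_ge0.
lra.
Qed.

Lemma expRN_le_taylor2 z : 0 <= z -> expR (- z) <= 1 - z + z ^+ 2 / 2.
Proof.
move=> z0; suff : -1 + 1 <= expR_cubic (-1) (-1) 1 (-1) 2^-1 0 z.
  by rewrite /expR_cubic !mulN1r; lra.
apply: expR_cubic_le => // x _; rewrite !mulN1r opprK.
by have := expR_ge1Dx (- x); lra.
Qed.

Lemma expRN_ge_taylor3 z : 0 <= z ->
  1 - z + z ^+ 2 / 2 - z ^+ 3 / 6 <= expR (- z).
Proof.
move=> z0; suff : 1 + -1 <= expR_cubic 1 (-1) (-1) 1 (- 2^-1) 6^-1 z.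
  by rewrite /expR_cubic !mulN1r mul1r; lra.
apply: expR_cubic_le => // x /andP[x0 _]; rewrite mul1r !mulN1r.
by have := expRN_le_taylor2 x0; lra.
Qed.

Lemma expR_taylor2_small y : `|y| <= 1 ->
  `|expR y - 1 - y - y ^+ 2 / 2| <= `|y| ^+ 3.
Proof.
have [y0 y1|y0 y1] := leP 0 y.
  rewrite ger0_norm // in y1 *; rewrite ger0_norm; last first.
    by have := expR_ge_taylor2 y0; lra.
  have /expR_le_taylor2 : 0 <= y <= 1 by rewrite y0 y1.
  lra.
rewrite ltr0_norm // in y1 *; rewrite -[y]opprK sqrrN.
have z0 : 0 <= - y by rewrite oppr_ge0 ltW.
rewrite ler0_norm; last by have := expRN_le_taylor2 z0; lra.
have := expRN_ge_taylor3 z0; have : 0 <= (- y) ^+ 3 by rewrite exprn_ge0.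
lra.
Qed.

Lemma expR_taylor2_le_powR y r : 0 < r <= 1 ->
  `|expR y - 1 - y - y ^+ 2 / 2| <= 4 * `|y| `^ (2 + r) * expR (Num.max y 0).
Proof.
move=> /andP[r0 r1]; rewrite powR2D //.
have m1 : 1 <= expR (Num.max y 0) by rewrite -expR0 ler_expR le_max lexx orbT.
have s0 : 0 <= `|y| `^ r by exact: powR_ge0.
have c0 : 0 <= `|y| ^+ 2 by exact: sqr_ge0.
have [y1|y1] := leP `|y| 1.
  have ys : `|y| <= `|y| `^ r.
    have [->|yn0] := eqVneq y 0; first by rewrite normr0 powR_ge0.
    by apply: ger1_powR => //; rewrite normr_gt0 yn0.
  have := expR_taylor2_small y1; rewrite exprSr.
  have : `|y| ^+ 2 * `|y| <= `|y| ^+ 2 * `|y| `^ r by rewrite ler_wpM2l.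
  have : 0 <= `|y| ^+ 2 * `|y| `^ r by rewrite mulr_ge0.
  nra.
have ys : 1 <= `|y| `^ r by rewrite -(powRr0 `|y|) ler_powR // ltW.
have yy : `|y| <= `|y| ^+ 2 by rewrite expr2 ler_peMl // ltW.
have me : expR y <= expR (Num.max y 0) by rewrite ler_expR le_max lexx.
have crude : `|expR y - 1 - y - y ^+ 2 / 2| <=
    expR (Num.max y 0) + 1 + `|y| + `|y| ^+ 2 / 2.
  have : - `|y| <= y <= `|y| by rewrite -ler_norml.
  have := expR_gt0 y; rewrite -[y ^+ 2]real_normK ?num_real // ler_norml.
  move=> e0 /andP[yl yr]; apply/andP; split; lra.
have c1 : 1 <= `|y| ^+ 2 by lra.
have cm : `|y| ^+ 2 <= `|y| ^+ 2 * expR (Num.max y 0) by rewrite ler_peMr.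
have mc : expR (Num.max y 0) <= `|y| ^+ 2 * expR (Num.max y 0) by rewrite ler_peMl // ltW.
have : `|y| ^+ 2 * expR (Num.max y 0) <= `|y| ^+ 2 * `|y| `^ r * expR (Num.max y 0).
  by rewrite ler_wpM2r ?expR_ge0 // ler_peMr.
lra.
Qed.

End exponential_bounds.

Section conditional_mgf_bounds.
Variable R : realType.

Lemma max0_scale (lam eps z : R) : 0 < eps -> 0 <= lam -> lam * eps <= 1 ->
  Num.max (lam * z) 0 <= Num.max z 0 / eps.
Proof.
move=> e0 l0 le1; rewrite -[X in Num.max _ X](mulr0 lam) -maxr_pMr //.
by rewrite ler_pdivlMr // mulrAC ler_piMl // le_max lexx orbT.
Qed.

Lemma expR_taylor2_scaled (lam eps r z : R) :
  0 < r <= 1 -> 0 < eps -> 0 <= lam -> lam * eps <= 1 ->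
  `|expR (lam * z) - 1 - lam * z - lam ^+ 2 / 2 * z ^+ 2| <=
  4 * lam `^ (2 + r) * (`|z| `^ (2 + r) * expR (Num.max z 0 / eps)).
Proof.
move=> r01 e0 l0 le1; have := expR_taylor2_le_powR (lam * z) r01.
rewrite normrM (ger0_norm l0) powRM // exprMn mulrAC => /le_trans; apply.
rewrite -!mulrA ler_wpM2l // ler_wpM2l ?powR_ge0 // ler_wpM2l ?powR_ge0 //.
by rewrite ler_expR max0_scale.
Qed.

Lemma cond_var_bounds (eps r v w : R) : 0 < r -> 0 < eps -> 0 <= w ->
  (1 + r / 2) * eps `^ r * v - r / 2 * eps `^ (2 + r) <= w ->
  w <= eps `^ r * v -> 0 <= v <= eps ^+ 2.
Proof.
move=> r0 e0 w0 wlo whi; have er0 : 0 < eps `^ r by exact: powR_gt0.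
rewrite (powR2D (ltW e0) r0) in wlo.
have v0 : 0 <= v by rewrite -(pmulr_rge0 _ er0); lra.
rewrite v0 /= -(ler_pM2l (_ : 0 < r / 2 * eps `^ r)) ?mulr_gt0 //; lra.
Qed.

Lemma ln_cond_mgf_le (lam eps r v w m : R) :
  0 < r <= 1 -> 0 < eps -> 0 <= lam -> lam * eps <= 1 ->
  0 <= v <= eps ^+ 2 -> w <= eps `^ r * v -> 1 <= m ->
  `|m - 1 - lam ^+ 2 / 2 * v| <= 4 * lam `^ (2 + r) * w ->
  `|ln m - lam ^+ 2 / 2 * v| <= 8 * (lam `^ (2 + r) * eps `^ r) * v.
Proof.
move=> /andP[r0 r1] e0 l0 le1 /andP[v0 ve] wv m1 mv.
have kappa : lam ^+ 2 * (lam * eps) ^+ 2 <= lam `^ (2 + r) * eps `^ r.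
  rewrite powR2D // -[_ * eps `^ r]mulrA -(powRM _ l0 (ltW e0)) ler_wpM2l ?sqr_ge0 //.
  by apply: sqr_le_powR; [rewrite mulr_ge0 ?le1 // ltW | lra].
have -> : 8 * (lam `^ (2 + r) * eps `^ r) * v = 2 * (4 * (lam `^ (2 + r) * eps `^ r) * v).
  by ring.
apply: ln_approx => //; first by rewrite mulr_ge0 // mulr_ge0 ?sqr_ge0.
  have : lam ^+ 2 * (lam * eps) ^+ 2 * v <= lam `^ (2 + r) * eps `^ r * v.
    exact: ler_wpM2r.
  have : 0 <= lam ^+ 4 * v * (eps ^+ 2 - v) by rewrite !mulr_ge0 ?exprn_ge0 ?subr_ge0.
  have : 0 <= lam `^ (2 + r) * eps `^ r * v by rewrite !mulr_ge0 ?powR_ge0.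
  lra.
have := ler_wpM2l (powR_ge0 lam (2 + r)) wv; lra.
Qed.

Lemma sum_approx (n : nat) (f v : nat -> R) (c k d : R) :
  0 <= c -> 0 <= k -> d <= 4^-1 ->
  (forall i, (1 <= i <= n)%N -> `|f i - c * v i| <= k * v i) ->
  `|\sum_(1 <= i < n.+1) v i - 1| <= d ->
  `|\sum_(1 <= i < n.+1) f i - c| <= 5 / 4 * k + c * d.
Proof.
move=> c0 k0 d14 fv vd.
have -> : \sum_(1 <= i < n.+1) f i - c =
    \sum_(1 <= i < n.+1) (f i - c * v i) + c * (\sum_(1 <= i < n.+1) v i - 1).
  by rewrite sumrB -mulr_sumr; ring.
apply: le_trans (ler_normD _ _) _; rewrite normrM (ger0_norm c0).
have sum_fv : `|\sum_(1 <= i < n.+1) (f i - c * v i)| <= k * \sum_(1 <= i < n.+1) v i.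
  apply: le_trans (ler_norm_sum _ _ _) _; rewrite mulr_sumr.
  by apply: ler_sum_nat => i /andP[i1 i2]; apply: fv; rewrite i1 -ltnS.
have : k * \sum_(1 <= i < n.+1) v i <= k * (5 / 4).
  by rewrite ler_wpM2l //; move: vd; rewrite ler_norml; lra.
have := ler_wpM2l c0 vd; lra.
Qed.

End conditional_mgf_bounds.

Section conditional_expectation.
Context {d : measure_display} {T : measurableType d} {R : realType}.
Variables (P : probability T R) (G : set (set T)).
Hypothesis sfG : sub_sigma_field G.

(* Viewing G as the measurable type [g_sigma_algebraType G] makes the library's
   closure properties of measurable functions available for G-measurability. *)
Lemma G_measurableE (f : T -> R) :
  G_measurable G f <-> measurable_fun [set: g_sigma_algebraType G] f.
Proof.
have sG := sfG.1.
split=> [hf _ B mB|hf B mB].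
  rewrite setTI; change (<<s G >> (f @^-1` B)).
  by rewrite sigma_algebra_id //; exact: hf.
have := hf measurableT B mB; rewrite setTI.
by change (<<s G >> (f @^-1` B) -> G (f @^-1` B)); rewrite sigma_algebra_id.
Qed.

Lemma Rintegral_cond_exp (X Y : T -> R) A : is_cond_exp P G X Y -> G A ->
  \int[P]_(x in A) Y x = \int[P]_(x in A) X x.
Proof. by case=> _ _ _ XY GA; rewrite /Rintegral XY. Qed.

Lemma is_cond_exp_cst (c : R) : is_cond_exp P G (cst c) (cst c).
Proof.
split => //; last exact: finite_measure_integrable_cst.
- by apply/G_measurableE; exact: measurable_cst.
- exact: finite_measure_integrable_cst.
Qed.

Lemma is_cond_expZ (a : R) (X Y : T -> R) : is_cond_exp P G X Y ->
  is_cond_exp P G (fun x => a * X x) (fun x => a * Y x).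
Proof.
case=> /G_measurableE mY iX iY XY; split.
- by apply/G_measurableE; apply: measurable_funM => //; exact: measurable_cst.
- by under eq_fun do rewrite EFinM; exact: integrableZl.
- by under eq_fun do rewrite EFinM; exact: integrableZl.
move=> A GA; have mA := sfG.2 _ GA.
under eq_integral do rewrite EFinM; under [in RHS]eq_integral do rewrite EFinM.
have iA f : P.-integrable setT (EFin \o f) -> P.-integrable A (EFin \o f).
  exact: integrableS.
by rewrite !integralZl ?iA // XY.
Qed.

Lemma is_cond_expD (X1 Y1 X2 Y2 : T -> R) :
  is_cond_exp P G X1 Y1 -> is_cond_exp P G X2 Y2 ->
  is_cond_exp P G (fun x => X1 x + X2 x) (fun x => Y1 x + Y2 x).
Proof.
case=> /G_measurableE mY1 iX1 iY1 XY1 [/G_measurableE mY2 iX2 iY2 XY2]; split.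
- by apply/G_measurableE; exact: measurable_funD.
- by under eq_fun do rewrite EFinD; exact: integrableD.
- by under eq_fun do rewrite EFinD; exact: integrableD.
move=> A GA; have mA := sfG.2 _ GA.
have iA f : P.-integrable setT (EFin \o f) -> P.-integrable A (EFin \o f).
  exact: integrableS.
by rewrite !integralD_EFin ?iA // XY1 // XY2.
Qed.

Lemma ae_le0_of_Rintegral_le0 (D : T -> R) : G_measurable G D ->
  P.-integrable setT (EFin \o D) ->
  (forall A, G A -> \int[P]_(x in A) D x <= 0) -> {ae P, forall x, D x <= 0}.
Proof.
move=> mD iD hD.
pose A k := D @^-1` `]k.+1%:R^-1, +oo[.
have mA k : measurable (A k) by apply: sfG.2; apply: mD; exact: measurable_itv.
have PA0 k : P (A k) = 0%E.
  have iA : P.-integrable (A k) (EFin \o D) by apply: integrableS iD.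
  have low : k.+1%:R^-1 * fine (P (A k)) <= \int[P]_(x in A k) D x.
    rewrite -Rintegral_cst //; apply: le_Rintegral => //.
      exact: finite_measure_integrable_cst.
    by move=> x; rewrite /A /= in_itv /= andbT => /ltW.
  have : fine (P (A k)) <= 0.
    rewrite -(pmulr_rle0 _ (_ : 0 < k.+1%:R^-1)) ?invr_gt0 //.
    exact: le_trans low (hD _ (mD _ (measurable_itv _))).
  move=> PA; rewrite -(fineK (fin_num_measure _ _ (mA k))).
  by congr EFin; apply/eqP; rewrite eq_le PA fine_ge0.
have negA k : {ae P, forall x, ~ A k x}.
  by exists (A k); split => // x /= /contrapT.
apply: filterS (ae_foralln negA) => x notA; rewrite leNgt; apply/negP => /ltr_add_invr[k].
by rewrite add0r => Dk; apply: (notA k); rewrite /A /= in_itv /= Dk.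
Qed.

Lemma is_cond_exp_le (X1 Y1 X2 Y2 : T -> R) :
  is_cond_exp P G X1 Y1 -> is_cond_exp P G X2 Y2 ->
  (forall x, X1 x <= X2 x) -> {ae P, forall x, Y1 x <= Y2 x}.
Proof.
move=> XY1 XY2 X12.
have XY := is_cond_expD XY1 (is_cond_expZ (-1) XY2); case: (XY) => mY iX iY _.
have : {ae P, forall x, Y1 x + -1 * Y2 x <= 0}.
  apply: ae_le0_of_Rintegral_le0 => // A GA; have mA := sfG.2 _ GA.
  rewrite (Rintegral_cond_exp XY GA).
  rewrite -(mul0r (fine (P A))) -Rintegral_cst //; apply: le_Rintegral => //.
  - by apply: integrableS iX.
  - exact: finite_measure_integrable_cst.
  - by move=> x _ /=; have := X12 x; lra.
by apply: filterS => x; lra.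
Qed.

Lemma ae_cond_var_le (X V W : T -> R) (eps r : R) : 0 < r -> 0 < eps ->
  is_cond_exp P G (fun x => X x ^+ 2) V ->
  is_cond_exp P G (fun x => `|X x| `^ (2 + r) * expR (Num.max (X x) 0 / eps)) W ->
  {ae P, forall x, W x <= eps `^ r * V x} ->
  {ae P, forall x, 0 <= V x <= eps ^+ 2}.
Proof.
move=> r0 e0 cV cW WV.
have W_ge_powR x : `|X x| `^ (2 + r) <=
    `|X x| `^ (2 + r) * expR (Num.max (X x) 0 / eps).
  by rewrite ler_peMr ?powR_ge0 // -expR0 ler_expR divr_ge0 ?le_max ?lexx ?orbT ?ltW.
have W0 : {ae P, forall x, 0 <= W x}.
  apply: is_cond_exp_le (is_cond_exp_cst 0) cW _ => x /=.
  by apply: le_trans (W_ge_powR x); exact: powR_ge0.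
have Wlo : {ae P, forall x,
    - (r / 2 * eps `^ (2 + r)) + (1 + r / 2) * eps `^ r * V x <= W x}.
  apply: is_cond_exp_le (is_cond_expD (is_cond_exp_cst (- (r / 2 * eps `^ (2 + r))))
    (is_cond_expZ ((1 + r / 2) * eps `^ r) cV)) cW _ => x /=.
  by have := norm_powR2D_ge (X x) e0 r0; have := W_ge_powR x; lra.
apply: (filterS3 _ _ W0 Wlo WV) => x w0 wlo wv.
by apply: cond_var_bounds r0 e0 w0 _ wv; lra.
Qed.

Lemma ae_cond_mgf_taylor2 (X V W M : T -> R) (lam eps r : R) :
  0 < r <= 1 -> 0 < eps -> 0 <= lam -> lam * eps <= 1 ->
  is_cond_exp P G X (fun _ => 0) ->
  is_cond_exp P G (fun x => X x ^+ 2) V ->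
  is_cond_exp P G (fun x => `|X x| `^ (2 + r) * expR (Num.max (X x) 0 / eps)) W ->
  is_cond_exp P G (fun x => expR (lam * X x)) M ->
  {ae P, forall x,
    1 <= M x /\ `|M x - 1 - lam ^+ 2 / 2 * V x| <= 4 * lam `^ (2 + r) * W x}.
Proof.
move=> r01 e0 l0 le1 cX cV cW cM.
have taylor x := expR_taylor2_scaled (X x) r01 e0 l0 le1.
have linear := is_cond_expD (is_cond_exp_cst 1) (is_cond_expZ lam cX).
have quad := is_cond_expD linear (is_cond_expZ (lam ^+ 2 / 2) cV).
have M1 : {ae P, forall x, 1 + lam * 0 <= M x}.
  by apply: is_cond_exp_le linear cM _ => x /=; exact: expR_ge1Dx.
have Mhi : {ae P, forall x, M x <=
    1 + lam * 0 + lam ^+ 2 / 2 * V x + 4 * lam `^ (2 + r) * W x}.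
  apply: is_cond_exp_le cM (is_cond_expD quad
    (is_cond_expZ (4 * lam `^ (2 + r)) cW)) _ => x /=.
  by have := taylor x; rewrite ler_norml => /andP[_]; lra.
have Mlo : {ae P, forall x,
    1 + lam * 0 + lam ^+ 2 / 2 * V x + - (4 * lam `^ (2 + r)) * W x <= M x}.
  apply: is_cond_exp_le (is_cond_expD quad
    (is_cond_expZ (- (4 * lam `^ (2 + r))) cW)) cM _ => x /=.
  by have := taylor x; rewrite ler_norml => /andP[+ _]; lra.
apply: (filterS3 _ _ M1 Mhi Mlo) => x; rewrite !mulr0 !addr0 => m1 mhi mlo.
by split => //; rewrite ler_norml; apply/andP; split; lra.
Qed.

Lemma ae_ln_cond_mgf_le (X V W M : T -> R) (lam eps r : R) :
  0 < r <= 1 -> 0 < eps -> 0 <= lam -> lam * eps <= 1 ->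
  is_cond_exp P G X (fun _ => 0) ->
  is_cond_exp P G (fun x => X x ^+ 2) V ->
  is_cond_exp P G (fun x => `|X x| `^ (2 + r) * expR (Num.max (X x) 0 / eps)) W ->
  {ae P, forall x, W x <= eps `^ r * V x} ->
  is_cond_exp P G (fun x => expR (lam * X x)) M ->
  {ae P, forall x,
     `|ln (M x) - lam ^+ 2 / 2 * V x| <= 8 * (lam `^ (2 + r) * eps `^ r) * V x}.
Proof.
move=> r01 e0 l0 le1 cX cV cW WV cM; have /andP[r0 _] := r01.
have V_le := ae_cond_var_le r0 e0 cV cW WV.
have M_taylor := ae_cond_mgf_taylor2 r01 e0 l0 le1 cX cV cW cM.
apply: (filterS3 _ _ V_le WV M_taylor) => x vb wv [m1 mW].
exact: (ln_cond_mgf_le r01 e0 l0 le1 vb wv m1 mW).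
Qed.

End conditional_expectation.

Theorem lemma3 (R : realType) :
  exists c : R, 0 < c /\
  forall (d : measure_display) (T : measurableType d) (P : probability T R)
    (n : nat) (F : nat -> set (set T)) (xi : nat -> T -> R)
    (rho eps delta : R) (V : nat -> T -> R),
    (1 <= n)%N ->
    filtration n F ->
    sq_int_mart_diff P n F xi ->
    (* V i is a version of E[xi_i^2 | F_{i-1}] *)
    (forall i, (1 <= i <= n)%N ->
       is_cond_exp P (F i.-1) (fun x => (xi i x) ^+ 2) (V i)) ->
    (* (A1) *)
    0 < rho <= 1 -> 0 < eps <= 2^-1 ->
    (forall i, (1 <= i <= n)%N ->
       exists W : T -> R,
         is_cond_exp P (F i.-1)
           (fun x => (`|xi i x| `^ (2 + rho)) * expR (Num.max (xi i x) 0 / eps))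
           W /\
         {ae P, forall x, W x <= eps `^ rho * V i x}) ->
    (* (A2) *)
    0 <= delta <= 2^-1 ->
    {ae P, forall x, `|\sum_(1 <= i < n.+1) V i x - 1| <= delta ^+ 2} ->
    forall lambda : R, 0 <= lambda <= eps^-1 ->
    forall M : nat -> T -> R,
      (* M i is a version of E[exp(lambda xi_i) | F_{i-1}] *)
      (forall i, (1 <= i <= n)%N ->
         is_cond_exp P (F i.-1) (fun x => expR (lambda * xi i x)) (M i)) ->
      {ae P, forall x,
        `|\sum_(1 <= i < n.+1) ln (M i x) - lambda ^+ 2 / 2|
          <= c * lambda `^ (2 + rho) * eps `^ rho
             + lambda ^+ 2 * delta ^+ 2 / 2}.
Proof.
exists 10; split => // d T P n F xi rho eps delta V _ [_ sfF _] [_ _ _ cxi] cV rho01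
  eps01 A1 delta01 A2 lam lam01 M cM.
have /andP[e0 _] := eps01; have /andP[l0 l1] := lam01.
have le1 : lam * eps <= 1 by rewrite -ler_pdivlMr // mul1r.
have step i : {ae P, forall x, (1 <= i <= n)%N ->
    `|ln (M i x) - lam ^+ 2 / 2 * V i x| <= 8 * (lam `^ (2 + rho) * eps `^ rho) * V i x}.
  have [hi|hi] := boolP (1 <= i <= n)%N; last by apply: aeW.
  have [W [cW WV]] := A1 i hi.
  have sfFi : sub_sigma_field (F i.-1).
    by apply: sfF; case/andP: hi => _ /(leq_trans (leq_pred i)).
  have := ae_ln_cond_mgf_le sfFi rho01 e0 l0 le1 (cxi i hi) (cV i hi) cW WV (cM i hi).
  by apply: filterS => x + _.
apply: (filterS2 _ _ (ae_foralln step) A2) => x bound S1.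
apply: le_trans (sum_approx _ _ _ bound S1) _.
- by rewrite divr_ge0 ?sqr_ge0.
- by rewrite !mulr_ge0 ?powR_ge0.
- by have /andP[d0 d1] := delta01; rewrite expr2; nra.
- lra.
Qed.
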